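(* Let $\alpha\in[0,1]$ and let $F$ be the space of weakly increasing functions from $[0,1]$ to $[0,1]$, equipped with the uniform norm. The functional $\phi:F\to[0,1]$ given by \[ \phi(f)=\inf_{0\le x<1}\frac{1-f(x\alpha)}{1-x} \] is continuous at every $f\in F$ with $f(\alpha)<1$. *)

From HB Require Import structures.
From mathcomp Require Import all_boot all_order all_algebra.
From mathcomp Require Import all_classical all_reals.
From mathcomp Require Import interval_inference topology normedtype.
Set Implicit Arguments. Unset Strict Implicit. Unset Printing Implicit Defensive.
Import Order.TTheory GRing.Theory Num.Theory.
Local Open Scope classical_set_scope.
Local Open Scope ring_scope.

(* f belongs to F: weakly increasing from [0,1] to [0,1]
   (only the values on [0,1] matter). *)
Definition inF {R : realType} (f : R -> R) : Prop :=
  (forall x, x \in `[0, 1] -> 0 <= f x <= 1) /\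
  (forall x y, x \in `[0, 1] -> y \in `[0, 1] -> x <= y -> f x <= f y).

Definition udist {R : realType} (f g : R -> R) : R :=
  sup [set `|f t - g t| | t in `[0, 1]%classic].

Definition phi {R : realType} (alpha : R) (f : R -> R) : R :=
  inf [set (1 - f (x * alpha)) / (1 - x) | x in `[0, 1[%classic].

From HB Require Import structures.
From mathcomp Require Import all_boot all_order all_algebra.
From mathcomp Require Import all_classical all_reals.
From mathcomp Require Import interval_inference topology normedtype.
From mathcomp Require Import ring lra.
Set Implicit Arguments. Unset Strict Implicit. Unset Printing Implicit Defensive.
Import Order.TTheory GRing.Theory Num.Theory.
Local Open Scope classical_set_scope.
Local Open Scope ring_scope.

(** Write [q_f(x) = (1 - f(x alpha)) / (1 - x)] and [d = udist f g].  On the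
    quotients, [|q_g(x) - q_f(x)| <= d / (1 - x)], which is small away from
    [x = 1]: evaluating at a near-minimiser of [q_f] bounds [phi g] from above.
    Near [x = 1] the factor [1 / (1 - x)] blows up, but there monotonicity
    gives [1 - g(x alpha) >= 1 - g(alpha) >= 1 - f(alpha) - d > 0], so [q_g(x)]
    exceeds [1 >= phi f]; this is where [f(alpha) < 1] is needed. *)

Section PhiContinuity.
Variables (R : realType) (alpha : R).
Hypothesis alpha01 : 0 <= alpha <= 1.

Definition phi_quot (f : R -> R) (x : R) : R := (1 - f (x * alpha)) / (1 - x).

Lemma phiE (f : R -> R) : phi alpha f = inf (phi_quot f @` `[0, 1[).
Proof. by []. Qed.

Lemma itv_subr_gt0 (x : R) : x \in `[0, 1[ -> 0 < 1 - x.
Proof. by rewrite in_itv /= subr_gt0 => /andP[]. Qed.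

Lemma mulr_alpha_itv (x : R) : x \in `[0, 1[ -> x * alpha \in `[0, 1].
Proof.
rewrite !in_itv /= => /andP[x0 x1]; case/andP: alpha01 => a0 a1.
by rewrite mulr_ge0 //= mulr_ile1 // ltW.
Qed.

Lemma has_inf_phi_quot (f : R -> R) : inF f -> has_inf (phi_quot f @` `[0, 1[).
Proof.
move=> [f01 _]; split; first by exists (phi_quot f 0), 0 => //=; rewrite in_itv /= lexx ltr01.
exists 0 => _ [x /= x01 <-].
have /andP[_ fx1] := f01 _ (mulr_alpha_itv x01).
by apply: divr_ge0; [rewrite subr_ge0 | exact/ltW/itv_subr_gt0].
Qed.

Lemma phi_le_quot (f : R -> R) (x : R) :
  inF f -> x \in `[0, 1[ -> phi alpha f <= phi_quot f x.
Proof.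
by move=> Ff x01; rewrite phiE; apply: ge_inf; [case: (has_inf_phi_quot Ff)|exists x].
Qed.

Lemma phi_le1 (f : R -> R) : inF f -> phi alpha f <= 1.
Proof.
move=> Ff; have x0 : (0 : R) \in `[0, 1[ by rewrite in_itv /= lexx ltr01.
have /andP[f0 _] := Ff.1 _ (mulr_alpha_itv x0).
by apply: le_trans (phi_le_quot Ff x0) _; rewrite /phi_quot subr0 divr1 gerBl.
Qed.

Lemma udist_ub (f g : R -> R) (t : R) :
  inF f -> inF g -> t \in `[0, 1] -> `|f t - g t| <= udist f g.
Proof.
move=> [f01 _] [g01 _] t01; apply: sup_upper_bound; last by exists t.
split; first by exists `|f t - g t|, t.
exists 1 => _ [s /= s01 <-].
have /andP[? ?] := f01 _ s01; have /andP[? ?] := g01 _ s01.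
rewrite ler_norml; apply/andP; split; lra.
Qed.

Lemma phi_quot_dist (f g : R -> R) (x : R) : inF f -> inF g -> x \in `[0, 1[ ->
  `|phi_quot g x - phi_quot f x| <= udist f g / (1 - x).
Proof.
move=> Ff Fg x01; have x1 := itv_subr_gt0 x01.
rewrite /phi_quot -mulrBl normrM [`|_^-1|]gtr0_norm ?invr_gt0 // ler_pM2r ?invr_gt0 //.
have -> : 1 - g (x * alpha) - (1 - f (x * alpha)) = f (x * alpha) - g (x * alpha).
  by ring.
by rewrite udist_ub // mulr_alpha_itv.
Qed.

Lemma phi_le_quot_add (f g : R -> R) (x : R) : inF f -> inF g -> x \in `[0, 1[ ->
  phi alpha g <= phi_quot f x + udist f g / (1 - x).
Proof.
move=> Ff Fg x01; have := phi_quot_dist Ff Fg x01; rewrite ler_norml => /andP[_].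
by have := phi_le_quot Fg x01; lra.
Qed.

Lemma phi_ge_sub (f g : R -> R) (k : R) : inF f -> inF g -> 0 < k ->
  udist f g <= 1 - f alpha - k -> phi alpha f - udist f g / k <= phi alpha g.
Proof.
move=> Ff Fg k0 dk; rewrite [phi alpha g]phiE.
apply: lb_le_inf; first by case: (has_inf_phi_quot Fg).
move=> _ [x /= x01 <-]; have x1 := itv_subr_gt0 x01.
have alpha_itv : alpha \in `[0, 1] by rewrite in_itv.
have d_alpha := udist_ub Ff Fg alpha_itv.
have d0 : 0 <= udist f g := le_trans (normr_ge0 _) d_alpha.
have [kx|xk] := leP k (1 - x).
- have dx : udist f g / (1 - x) <= udist f g / k by rewrite ler_wpM2l ?lef_pV2 ?posrE.
  have := phi_quot_dist Ff Fg x01; rewrite ler_norml => /andP[+ _].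
  by have := phi_le_quot Ff x01; lra.
- have gxa : g (x * alpha) <= g alpha.
    apply: Fg.2 => //; first exact: mulr_alpha_itv.
    by rewrite ler_piMl //; [case/andP: alpha01|move: x01; rewrite in_itv /= => /andP[_ /ltW]].
  have q1 : 1 <= phi_quot g x.
    by rewrite /phi_quot ler_pdivlMr // mul1r; move: d_alpha; rewrite ler_norml; lra.
  have dk0 : 0 <= udist f g / k by rewrite divr_ge0 // ltW.
  by have := phi_le1 Ff; lra.
Qed.

End PhiContinuity.

Theorem lemma7 (R : realType) (alpha : R) (f : R -> R) :
  0 <= alpha <= 1 -> inF f -> f alpha < 1 ->
  forall eps : R, 0 < eps -> exists2 delta : R, 0 < delta &
    forall g : R -> R, inF g -> udist f g < delta ->
      `|phi alpha g - phi alpha f| < eps.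
Proof.
move=> alpha01 Ff fa1 eps eps0.
set c := 1 - f alpha; have c0 : 0 < c by rewrite subr_gt0.
have eps20 : 0 < eps / 2 by rewrite divr_gt0.
have [_ [x0 x01 <-] near_inf] := inf_adherent eps20 (has_inf_phi_quot alpha01 Ff).
have {}x01 : x0 \in `[0, 1[ := x01.
have {}near_inf : phi_quot alpha f x0 < phi alpha f + eps / 2 := near_inf.
have x1 := itv_subr_gt0 x01.
exists (Num.min (c / 2) (Num.min (eps * c / 2) (eps / 2 * (1 - x0)))).
  by rewrite !lt_min !divr_gt0 ?mulr_gt0.
move=> g Fg; rewrite !lt_min => /andP[dc /andP[dceps dx0]].
have c20 : 0 < c / 2 by rewrite divr_gt0.
have dc2 : udist f g <= c - c / 2 by lra.
have lower := phi_ge_sub alpha01 Ff Fg c20 dc2.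
have upper := phi_le_quot_add alpha01 Ff Fg x01.
have dc_eps : udist f g / (c / 2) < eps by rewrite ltr_pdivrMr // mulrA.
have dx_eps : udist f g / (1 - x0) < eps / 2 by rewrite ltr_pdivrMr.
by rewrite ltr_norml; apply/andP; split; lra.
Qed.
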